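(* Let $\mathcal F=\{F^c_{t,k}\}$ be an F-system and $R,\lambda$ reals such that $|F^A_t\cup F^B_t|\le Rt+\lambda$ for every positive integer $t$. Then for every positive integer $t$, $|S_t|\ge(2-R)t-\lambda$.
   Context: F-system: a family $\mathcal F=\{F^c_{t,k}\}$ of sets of positive integers, indexed by $c\in\{A,B\}$ and integers $0<k\le t$, such that (F1) $|F^c_{t,k}|\ge k$ for all $c,t,k$; and (F2) $F^A_{t,k}\cap F^B_{t',k'}=\emptyset$ for all $k\le t$, $k'\le t'$ with $k+k'\le\max(t,t')$. Notation: $F^c_t=\bigcup_{0<\kappa\le\tau\le t}F^c_{\tau,\kappa}$ for $c\in\{A,B\}$, and $S_t=F^A_t\cap F^B_t$. *)

From Stdlib Require Import Reals Arith List.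
Import ListNotations.
Open Scope R_scope.

Inductive color := A | B.

(* |X| <= r : every finite duplicate-free list of elements of X has length <= r
   (so an infinite X never satisfies it). *)
Definition card_le (X : nat -> Prop) (r : R) : Prop :=
  forall l : list nat, NoDup l -> (forall x, In x l -> X x) -> INR (length l) <= r.

(* |X| >= r : X contains r distinct elements (true for infinite X). *)
Definition card_ge (X : nat -> Prop) (r : R) : Prop :=
  exists l : list nat, NoDup l /\ (forall x, In x l -> X x) /\ r <= INR (length l).

(* F c t k is the set F^c_{t,k}; only indices 0 < k <= t are relevant. *)
Definition Fsystem (F : color -> nat -> nat -> nat -> Prop) : Prop :=
  (forall c t k x, (0 < k <= t)%nat -> F c t k x -> (0 < x)%nat) /\
  (forall c t k, (0 < k <= t)%nat -> card_ge (F c t k) (INR k)) /\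
  (forall t k t' k' x, (0 < k <= t)%nat -> (0 < k' <= t')%nat ->
     (k + k' <= Nat.max t t')%nat -> F A t k x -> F B t' k' x -> False).

Definition Fc (F : color -> nat -> nat -> nat -> Prop) (c : color) (t : nat) (x : nat) : Prop :=
  exists tau kappa, (0 < kappa <= tau)%nat /\ (tau <= t)%nat /\ F c tau kappa x.

Definition St (F : color -> nat -> nat -> nat -> Prop) (t : nat) (x : nat) : Prop :=
  Fc F A t x /\ Fc F B t x.

(* Only the diagonal sets are needed: [F^A_{t,t}] and [F^B_{t,t}] both lie in
   [F^A_t ∪ F^B_t] and have at least [t] elements each, so by
   inclusion–exclusion their intersection, which lies in [S_t], has at least
   [2t - (Rt + λ)] elements. *)
From Stdlib Require Import Reals List Lra Lia.
Open Scope R_scope.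

Lemma card_ge_subset (X Y : nat -> Prop) (r : R) :
  (forall x, X x -> Y x) -> card_ge X r -> card_ge Y r.
Proof.
  intros HXY [l [Hnd [Hin Hlen]]].
  exists l; split; [exact Hnd | split; [|exact Hlen]].
  intros x Hx; apply HXY, Hin, Hx.
Qed.

Lemma card_ge_inter (X Y : nat -> Prop) (a b c : R) :
  card_ge X a -> card_ge Y b -> card_le (fun x => X x \/ Y x) c ->
  card_ge (fun x => X x /\ Y x) (a + b - c).
Proof.
  intros [lX [NX [IX LX]]] [lY [NY [IY LY]]] Hunion.
  set (inX := fun x => if in_dec Nat.eq_dec x lX then true else false).
  set (common := filter inX lY).
  set (rest := filter (fun x => negb (inX x)) lY).
  assert (Hrest : forall x, In x rest -> Y x /\ ~ In x lX).
  { intros x Hx; apply filter_In in Hx as [Hx Hnot]; split; auto.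
    unfold inX in Hnot; destruct (in_dec Nat.eq_dec x lX); easy. }
  assert (Hsize : INR (length lX + length rest) <= c).
  { rewrite <- length_app; apply Hunion.
    - apply NoDup_app; [exact NX | apply NoDup_filter, NY |].
      intros x HxX HxR; apply (Hrest x HxR), HxX.
    - intros x Hx; apply in_app_or in Hx as [Hx | Hx].
      + left; apply IX, Hx.
      + right; apply (Hrest x Hx). }
  assert (Hsplit : length lY = (length common + length rest)%nat)
    by (symmetry; apply filter_length).
  exists common; split; [apply NoDup_filter, NY | split].
  - intros x Hx; apply filter_In in Hx as [HxY HxX]; split; auto.
    unfold inX in HxX; destruct (in_dec Nat.eq_dec x lX) as [HxlX |];
      [apply IX, HxlX | discriminate].
  - rewrite Hsplit, plus_INR in LY; rewrite plus_INR in Hsize; lra.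
Qed.

Lemma card_ge_Fc_diag (F : color -> nat -> nat -> nat -> Prop) (c : color) (t : nat) :
  Fsystem F -> (0 < t)%nat -> card_ge (Fc F c t) (INR t).
Proof.
  intros [_ [Hcard _]] Ht.
  assert (Htt : (0 < t <= t)%nat) by lia.
  apply (card_ge_subset (F c t t)), Hcard, Htt.
  intros x Hx; exists t, t; repeat split; auto; lia.
Qed.

Theorem lemma2 (F : color -> nat -> nat -> nat -> Prop) (Rr lam : R) :
  Fsystem F ->
  (forall t : nat, (0 < t)%nat ->
     card_le (fun x => Fc F A t x \/ Fc F B t x) (Rr * INR t + lam)) ->
  forall t : nat, (0 < t)%nat ->
    card_ge (St F t) ((2 - Rr) * INR t - lam).
Proof.
  intros HF Hunion t Ht.
  replace ((2 - Rr) * INR t - lam) with (INR t + INR t - (Rr * INR t + lam))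
    by ring.
  apply card_ge_inter.
  - apply card_ge_Fc_diag; assumption.
  - apply card_ge_Fc_diag; assumption.
  - apply Hunion, Ht.
Qed.
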